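(* Let $S$ be the standard form on $\mathbb{R}^{2m}$ and let $F$ be a closed $S$-monotone set in $\mathbb{R}^{2m}$ such that $\psi_F(y)\ge\frac12S(y,y)$ for all $y\in\mathbb{R}^{2m}$. Then $H:=\{x:\psi_F(x)=\frac12S(x,x)\}\in\mathcal{M}(S)$, and for every $G\in\mathcal{M}(S)$: $$F\subset G\iff G=H\iff\psi_G=\psi_F\iff\psi_G\le\psi_F.$$
   Context: Standard form on $\mathbb{R}^{2m}$: $S((r,s),(u,v)):=\langle s,u\rangle+\langle r,v\rangle$, $r,s,u,v\in\mathbb{R}^m$. A set $G$ is $S$-monotone if $S(x-y,x-y)\ge0$ for $x,y\in G$; maximal if not a strict subset of another $S$-monotone set; $\mathcal{M}(S)$ is the family of maximal $S$-monotone sets. For a closed set $F\subset\mathbb{R}^{2m}$, $\psi_F(y):=\sup_{x\in F}(S(x,y)-\frac12S(x,x))$. *)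

(* R^{2m} is represented as pairs (r,s) of row
   vectors in R^m, with the product topology. *)
From HB Require Import structures.
From mathcomp Require Import all_boot all_order all_algebra.
From mathcomp Require Import all_classical all_reals all_analysis.
Set Implicit Arguments. Unset Strict Implicit. Unset Printing Implicit Defensive.
Import Order.TTheory GRing.Theory Num.Theory.
Import numFieldNormedType.Exports.
Local Open Scope classical_set_scope.
Local Open Scope ring_scope.

Notation R2m R m := ('rV[R]_m * 'rV[R]_m)%type (only parsing).

Definition dotv (R : realType) (m : nat) (a b : 'rV[R]_m) : R :=
  \sum_(i < m) a 0 i * b 0 i.

Definition Sform (R : realType) (m : nat) (x y : R2m R m) : R :=
  dotv x.2 y.1 + dotv x.1 y.2.

Definition subv (R : realType) (m : nat) (x y : R2m R m) : R2m R m :=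
  (x.1 - y.1, x.2 - y.2).

Definition Smonotone (R : realType) (m : nat) (G : set (R2m R m)) : Prop :=
  forall x y, G x -> G y -> 0 <= Sform (subv x y) (subv x y).

Definition maxSmonotone (R : realType) (m : nat) (G : set (R2m R m)) : Prop :=
  Smonotone G /\
  forall G' : set (R2m R m), Smonotone G' -> G `<=` G' -> G' = G.

Definition psi (R : realType) (m : nat) (F : set (R2m R m)) (y : R2m R m)
  : \bar R :=
  ereal_sup [set ((Sform x y - Sform x x / 2)%:E) | x in F].

(* psi_F is a supremum of affine functions, hence convex, and by hypothesis
   it dominates Q y = S(y,y)/2.  At a contact point x (psi_F x = Q x) the
   tangent y |-> S(x,y) - Q x of Q must then stay below psi_F; at a second
   contact point y this says S(x-y, x-y) >= 0, so the contact set H is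
   S-monotone, and psi_H = psi_F.  Moreover z is S-monotonically related to
   every point of G iff psi_G z <= Q z: hence every S-monotone set containing F
   lies in H, and a maximal G with psi_G <= psi_F contains F. *)
From HB Require Import structures.
From mathcomp Require Import all_boot all_order all_algebra.
From mathcomp Require Import all_classical all_reals all_analysis.
From mathcomp Require Import ring lra.
Import Order.TTheory GRing.Theory Num.Theory.
Import numFieldNormedType.Exports.
Local Open Scope classical_set_scope.
Local Open Scope ring_scope.

Local Notation Q x := (Sform x x / 2).

Lemma le0_of_small_quadratic (R : realFieldType) (a b : R) :
  (forall t, 0 < t <= 1 -> t * a + t ^+ 2 * b <= 0) -> a <= 0.
Proof.
move=> small; rewrite leNgt; apply/negP => a_gt0.
have s_gt0 : 0 < a + `|b| by rewrite ltr_wpDr.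
pose t := a / (a + `|b|).
have t_gt0 : 0 < t by rewrite divr_gt0.
have t_le1 : t <= 1 by rewrite ler_pdivrMr // mul1r lerDl.
have ts : t * a + t * `|b| = a by rewrite -mulrDr divfK // gt_eqF.
have b_ge0 : 0 <= `|b| + b by have := lerNnormlW (lexx `|b|); lra.
have : t * a + t ^+ 2 * b = t ^+ 2 * a + t ^+ 2 * (`|b| + b).
  by rewrite -{1}ts; ring.
have := small t; rewrite t_gt0 t_le1 => /(_ isT).
have : 0 < t ^+ 2 * a by rewrite mulr_gt0 // exprn_gt0.
have : 0 <= t ^+ 2 * (`|b| + b) by rewrite mulr_ge0 // exprn_ge0 // ltW.
lra.
Qed.

Section StandardForm.
Context {R : realType} {m : nat}.
Implicit Types (a b c : 'rV[R]_m) (x y z : R2m R m) (t : R).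

Lemma dotvC a b : dotv a b = dotv b a.
Proof. by apply: eq_bigr => i _; rewrite mulrC. Qed.

Lemma dotvDl a b c : dotv (a + b) c = dotv a c + dotv b c.
Proof. by rewrite /dotv -big_split; apply: eq_bigr => i _; rewrite mxE mulrDl. Qed.

Lemma dotvZl t a c : dotv (t *: a) c = t * dotv a c.
Proof. by rewrite /dotv mulr_sumr; apply: eq_bigr => i _; rewrite mxE mulrA. Qed.

Lemma SformC x y : Sform x y = Sform y x.
Proof. by rewrite /Sform addrC (dotvC x.1) (dotvC x.2). Qed.

Lemma SformDl x y z : Sform (x + y) z = Sform x z + Sform y z.
Proof. by rewrite /Sform /= !dotvDl addrACA. Qed.

Lemma SformZl t x z : Sform (t *: x) z = t * Sform x z.
Proof. by rewrite /Sform /= !dotvZl mulrDr. Qed.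

Lemma SformNl x z : Sform (- x) z = - Sform x z.
Proof. by rewrite -scaleN1r SformZl mulN1r. Qed.

Lemma SformBl x y z : Sform (x - y) z = Sform x z - Sform y z.
Proof. by rewrite SformDl SformNl. Qed.

Lemma SformDr x y z : Sform z (x + y) = Sform z x + Sform z y.
Proof. by rewrite SformC SformDl !(SformC z). Qed.

Lemma SformZr t x z : Sform z (t *: x) = t * Sform z x.
Proof. by rewrite SformC SformZl SformC. Qed.

Lemma SformBr x y z : Sform z (x - y) = Sform z x - Sform z y.
Proof. by rewrite SformC SformBl !(SformC z). Qed.

Lemma Sform_subv x y : Sform (subv x y) (subv x y) = Sform x x - 2 * Sform x y + Sform y y.
Proof. by rewrite /subv -/(x - y) SformBl !SformBr (SformC y x); ring. Qed.

Lemma Sform_subvC x y : Sform (subv x y) (subv x y) = Sform (subv y x) (subv y x).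
Proof. by rewrite !Sform_subv (SformC y x); ring. Qed.

Lemma Sform_subv_ge0 x y :
  (0 <= Sform (subv x y) (subv x y)) = (Sform y x - Q y <= Q x).
Proof. by rewrite Sform_subv (SformC x y); apply/idP/idP => h; lra. Qed.

End StandardForm.

Section Psi.
Context {R : realType} {m : nat}.
Implicit Types (G : set (R2m R m)) (x y z : R2m R m).

Lemma psi_ge {G z} y : G z -> ((Sform z y - Q z)%:E <= psi G y)%E.
Proof. by move=> Gz; apply: ereal_sup_ubound; exists z. Qed.

Lemma psi_le G y (c : R) :
  (forall z, G z -> Sform z y - Q z <= c) -> (psi G y <= c%:E)%E.
Proof. by move=> le_c; apply: ge_ereal_sup => _ [z Gz <-]; rewrite lee_fin le_c. Qed.

Lemma psi_subset A B y : A `<=` B -> (psi A y <= psi B y)%E.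
Proof. by move=> AB; apply: ereal_sup_le => _ [z Az <-]; exists z => //; apply: AB. Qed.

Lemma psi_le_QP G y :
  (psi G y <= (Q y)%:E)%E <-> forall z, G z -> 0 <= Sform (subv y z) (subv y z).
Proof.
split=> [le_Q z Gz | ge0]; last by apply: psi_le => z /ge0; rewrite Sform_subv_ge0.
by rewrite Sform_subv_ge0 -lee_fin (le_trans (psi_ge y Gz)).
Qed.

Lemma Smonotone_psi G x : Smonotone G -> G x -> psi G x = (Q x)%:E.
Proof.
move=> monoG Gx; apply/le_anti/andP; split; first by apply/psi_le_QP => z; apply: monoG.
by have := psi_ge x Gx; rewrite (_ : Sform x x - Q x = Q x) //; field.
Qed.

Lemma maxSmonotone_psi_le G z : maxSmonotone G -> (psi G z <= (Q z)%:E)%E -> G z.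
Proof.
move=> [monoG maxG] /psi_le_QP compat_z.
have monoGz : Smonotone (G `|` [set z]).
  move=> a b [Ga | ->] [Gb | ->]; first exact: monoG.
  - by rewrite Sform_subvC; apply: compat_z.
  - exact: compat_z.
  - by rewrite Sform_subv; lra.
by rewrite -(maxG _ monoGz (@subsetUl _ _ _)); right.
Qed.

Lemma psi_segment_le {G x y} {a b t : R} : 0 <= t <= 1 ->
  (psi G x <= a%:E)%E -> (psi G y <= b%:E)%E ->
  (psi G (x + t *: (y - x))%R <= ((1 - t) * a + t * b)%:E)%E.
Proof.
move=> /andP[t_ge0 t_le1] psi_x psi_y; apply: psi_le => z Gz.
have /le_trans/(_ psi_x) := psi_ge x Gz; rewrite lee_fin => le_a.
have /le_trans/(_ psi_y) := psi_ge y Gz; rewrite lee_fin => le_b.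
rewrite SformDr SformZr SformBr.
have -> : Sform z x + t * (Sform z y - Sform z x) - Q z =
          (1 - t) * (Sform z x - Q z) + t * (Sform z y - Q z) by ring.
by rewrite lerD // ler_wpM2l // subr_ge0.
Qed.

End Psi.

Section ContactSet.
Context {R : realType} {m : nat}.
Variable F : set (R2m R m).
Hypothesis Q_le_psiF : forall y, ((Q y)%:E <= psi F y)%E.

Definition contact_set := [set x | psi F x = (Q x)%:E].

(* Along the segment from x to y, Q <= psi_F lies below the chord of psi_F,
   and the two meet at x; the first-order terms in t give the claim. *)
Lemma contact_le_psi x y : psi F x = (Q x)%:E -> ((Sform x y - Q x)%:E <= psi F y)%E.
Proof.
move=> psi_x; case psi_y: (psi F y) => [p | | ]; first last.
- by have := Q_le_psiF y; rewrite psi_y leeNy_eq.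
- by rewrite leey.
rewrite lee_fin -subr_le0; apply: (@le0_of_small_quadratic _ _ (Q (y - x))).
move=> t /andP[t_gt0 t_le1]; have t01 : 0 <= t <= 1 by rewrite ltW.
have le_x : (psi F x <= (Q x)%:E)%E by rewrite psi_x.
have le_y : (psi F y <= p%:E)%E by rewrite psi_y.
have psi_seg := psi_segment_le t01 le_x le_y.
have := le_trans (Q_le_psiF (x + t *: (y - x))) psi_seg; rewrite lee_fin -subr_le0.
congr (_ <= 0).
by rewrite !(SformBl, SformBr, SformDl, SformDr, SformZl, SformZr) (SformC y x); field.
Qed.

Lemma contact_set_Smonotone : Smonotone contact_set.
Proof.
move=> x y psi_x psi_y; rewrite Sform_subvC Sform_subv_ge0 -lee_fin -psi_y.
exact: contact_le_psi.
Qed.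

Lemma sub_contact_set : Smonotone F -> F `<=` contact_set.
Proof.
move=> monoF x Fx; apply/le_anti; rewrite Q_le_psiF andbT.
by apply/psi_le_QP => z; apply: monoF.
Qed.

Lemma Smonotone_sub_contact_set G : Smonotone G -> F `<=` G -> G `<=` contact_set.
Proof.
move=> monoG FG x Gx; apply/le_anti; rewrite Q_le_psiF andbT.
by apply/psi_le_QP => z /FG; apply: monoG.
Qed.

Lemma contact_set_maxSmonotone : Smonotone F -> maxSmonotone contact_set.
Proof.
move=> monoF; split=> [|G monoG CG]; first exact: contact_set_Smonotone.
apply/seteqP; split=> //; apply: Smonotone_sub_contact_set => //.
exact: subset_trans (sub_contact_set monoF) CG.
Qed.

Lemma psi_contact_set : Smonotone F -> psi contact_set = psi F.
Proof.
move=> monoF; apply/funext => y; apply/le_anti/andP; split.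
  by apply: ge_ereal_sup => _ [x psi_x <-]; apply: contact_le_psi.
exact/psi_subset/sub_contact_set.
Qed.

End ContactSet.

Theorem lemma7 (R : realType) (m : nat) (F : set (R2m R m)) :
  closed F -> Smonotone F ->
  (forall y : R2m R m, ((Sform y y / 2)%:E <= psi F y)%E) ->
  let H := [set x | psi F x = (Sform x x / 2)%:E] in
  maxSmonotone H /\
  forall G : set (R2m R m), maxSmonotone G ->
    (F `<=` G <-> G = H) /\
    (G = H <-> psi G = psi F) /\
    (psi G = psi F <-> forall y, (psi G y <= psi F y)%E).
Proof.
move=> _ monoF Q_le_psiF H.
have FH : F `<=` H by apply: sub_contact_set.
have maxH : maxSmonotone H by apply: contact_set_maxSmonotone.
split=> // G [monoG maxG].
have eqH : G `<=` H -> G = H by move=> GH; rewrite (maxG _ maxH.1 GH).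
have FG_eqH : F `<=` G <-> G = H.
  split=> [FG | ->] //.
  exact/eqH/Smonotone_sub_contact_set.
have eqH_psi : G = H <-> psi G = psi F.
  split=> [-> | psiGF]; first exact: psi_contact_set.
  by apply: eqH => x Gx; rewrite /H /= -psiGF; apply: Smonotone_psi.
do 2!split=> //; split=> [-> // | psiG_le].
apply/eqH_psi/FG_eqH => z Fz; apply: maxSmonotone_psi_le => //.
by rewrite -(FH z Fz).
Qed.
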